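(* Let $\mathcal M$ be a Polish metric structure and $\mathcal N$ a countable approximating substructure of $\mathcal M$. For every open $U\subseteq\mathrm{Aut}(\mathcal M)$, the set $U\cap\mathrm{Aut}(\mathcal N)$ is open in $\mathrm{Aut}(\mathcal N)$.
   Context: A metric structure $\mathcal M$ is a complete bounded metric space $(M,d)$ with a family of uniformly continuous bounded predicates $P_i\colon M^{k_i}\to\mathbb R$ (including $d$) and uniformly continuous functions $f_j\colon M^{\ell_j}\to M$; it is Polish if $M$ is separable. Automorphisms are bijections preserving all predicates and functions; $\mathrm{Aut}(\mathcal M)$ carries the topology of pointwise convergence on $(M,d)$. A countable (classical) structure $\mathcal N$ is a countable approximating substructure of $\mathcal M$ if its universe $N$ is a countable dense subset of $(M,d)$, every automorphism of $\mathcal N$ extends to an automorphism of $\mathcal M$, and (via this extension) $\mathrm{Aut}(\mathcal N)$ is dense in $\mathrm{Aut}(\mathcal M)$. $\mathrm{Aut}(\mathcal N)$ carries the topology of pointwise convergence on the discrete set $N$, and is regarded as a subset of $\mathrm{Aut}(\mathcal M)$ via the extension. *)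

From HB Require Import structures.
From mathcomp Require Import all_boot all_order all_algebra.
From mathcomp Require Import reals.
Set Implicit Arguments.
Unset Strict Implicit.
Unset Printing Implicit Defensive.
Import Order.TTheory GRing.Theory Num.Theory.
Local Open Scope ring_scope.

Record MetricStructure (R : realType) := {
  ms_car : Type;
  ms_d : ms_car -> ms_car -> R;
  ms_PI : Type;
  ms_Par : ms_PI -> nat;
  ms_P : forall i : ms_PI, ('I_(ms_Par i) -> ms_car) -> R;
  ms_FI : Type;
  ms_Far : ms_FI -> nat;
  ms_F : forall j : ms_FI, ('I_(ms_Far j) -> ms_car) -> ms_car
}.

Section MS.
Variables (R : realType) (M : MetricStructure R).
Local Notation car := (ms_car M).
Local Notation d := (@ms_d R M).

Definition is_metric : Prop :=
  (forall x y, 0 <= d x y) /\ (forall x y, d x y = 0 <-> x = y) /\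
  (forall x y, d x y = d y x) /\ (forall x y z, d x z <= d x y + d y z).

Definition is_bounded_metric : Prop := exists B : R, forall x y, d x y <= B.

Definition cauchy_seq (s : nat -> car) : Prop :=
  forall eps : R, 0 < eps -> exists N : nat,
    forall m n, (N <= m)%N -> (N <= n)%N -> d (s m) (s n) < eps.

Definition converges_to (s : nat -> car) (x : car) : Prop :=
  forall eps : R, 0 < eps -> exists N : nat, forall n, (N <= n)%N -> d (s n) x < eps.

Definition is_complete : Prop :=
  forall s : nat -> car, cauchy_seq s -> exists x, converges_to s x.

Definition unif_cont_pred (k : nat) (P : ('I_k -> car) -> R) : Prop :=
  forall eps : R, 0 < eps -> exists delta : R, 0 < delta /\
    forall a b : 'I_k -> car, (forall t, d (a t) (b t) < delta) ->
      `|P a - P b| < eps.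

Definition unif_cont_fun (k : nat) (f : ('I_k -> car) -> car) : Prop :=
  forall eps : R, 0 < eps -> exists delta : R, 0 < delta /\
    forall a b : 'I_k -> car, (forall t, d (a t) (b t) < delta) ->
      d (f a) (f b) < eps.

Definition bounded_pred (k : nat) (P : ('I_k -> car) -> R) : Prop :=
  exists B : R, forall a, `|P a| <= B.

(* The
   metric d itself is uniformly continuous and bounded automatically,
   and automorphisms are required to preserve it (see is_autM). *)
Definition is_metric_structure : Prop :=
  [/\ is_metric, is_bounded_metric, is_complete,
      (forall i, unif_cont_pred (@ms_P R M i) /\ bounded_pred (@ms_P R M i))
    & (forall j, unif_cont_fun (@ms_F R M j))].

Definition dense_map (T : Type) (e : T -> car) : Prop :=
  forall (x : car) (eps : R), 0 < eps -> exists t : T, d x (e t) < eps.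

Definition is_polish : Prop :=
  is_metric_structure /\ exists (T : countType) (e : T -> car), dense_map e.

Definition is_autM (g : car -> car) : Prop :=
  [/\ bijective g,
      (forall x y, d (g x) (g y) = d x y),
      (forall i (a : 'I_(ms_Par i) -> car), @ms_P R M i (g \o a) = @ms_P R M i a)
    & (forall j (a : 'I_(ms_Far j) -> car), g (@ms_F R M j a) = @ms_F R M j (g \o a))].

(* open subsets of Aut(M) in the topology of pointwise convergence on (M,d) *)
Definition autM_open (U : (car -> car) -> Prop) : Prop :=
  (forall g, U g -> is_autM g) /\
  forall g, U g -> exists (n : nat) (xs : 'I_n -> car) (eps : R), 0 < eps /\
    forall h, is_autM h -> (forall t, d (h (xs t)) (g (xs t)) < eps) -> U h.
End MS.

Record ClassicalStructure := {
  cs_car : countType;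
  cs_RI : Type;
  cs_Rar : cs_RI -> nat;
  cs_R : forall i : cs_RI, ('I_(cs_Rar i) -> cs_car) -> Prop;
  cs_FI : Type;
  cs_Far : cs_FI -> nat;
  cs_F : forall j : cs_FI, ('I_(cs_Far j) -> cs_car) -> cs_car
}.

Section CS.
Variable N : ClassicalStructure.
Local Notation car := (cs_car N).

Definition is_autN (s : car -> car) : Prop :=
  [/\ bijective s,
      (forall i (a : 'I_(cs_Rar i) -> car), @cs_R N i (s \o a) <-> @cs_R N i a)
    & (forall j (a : 'I_(cs_Far j) -> car), s (@cs_F N j a) = @cs_F N j (s \o a))].

(* open subsets of Aut(N): pointwise convergence on the discrete set N *)
Definition autN_open (V : (car -> car) -> Prop) : Prop :=
  (forall s, V s -> is_autN s) /\
  forall s, V s -> exists (n : nat) (xs : 'I_n -> car),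
    forall t, is_autN t -> (forall k, t (xs k) = s (xs k)) -> V t.
End CS.

Definition extends (R : realType) (M : MetricStructure R) (N : ClassicalStructure)
  (iota : cs_car N -> ms_car M) (g : ms_car M -> ms_car M) (s : cs_car N -> cs_car N) :=
  forall x, g (iota x) = iota (s x).

Definition approximating (R : realType) (M : MetricStructure R)
  (N : ClassicalStructure) (iota : cs_car N -> ms_car M) : Prop :=
  [/\ injective iota,
      dense_map iota,
      (forall s, is_autN s -> exists g, is_autM g /\ extends iota g s)
    & (forall g, is_autM g -> forall (n : nat) (xs : 'I_n -> ms_car M) (eps : R),
         0 < eps -> exists s h, [/\ is_autN s, is_autM h, extends iota h s &
           forall t, @ms_d R M (h (xs t)) (g (xs t)) < eps])].

(* U ∩ Aut(N), Aut(N) regarded as a subset of Aut(M) via extension *)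
Definition trace_on_autN (R : realType) (M : MetricStructure R)
  (N : ClassicalStructure) (iota : cs_car N -> ms_car M)
  (U : (ms_car M -> ms_car M) -> Prop) : (cs_car N -> cs_car N) -> Prop :=
  fun s => is_autN s /\ exists g, U g /\ extends iota g s.

From mathcomp Require Import all_boot all_order all_algebra reals.
From Stdlib Require Import ClassicalEpsilon.
Set Implicit Arguments.
Unset Strict Implicit.
Unset Printing Implicit Defensive.

Import Order.TTheory GRing.Theory Num.Theory.
Local Open Scope ring_scope.

(* A basic open neighbourhood of g in Aut(M) is given by finitely many points
   x_k and a radius eps.  Pick points iota y_k of the dense set N within eps/2
   of the x_k.  If an automorphism of N agrees with the restriction of g on the
   y_k, then any extension h of it agrees with g on the iota y_k, and since h
   and g are isometries, d(h x_k, g x_k) <= 2 d(x_k, iota y_k) < eps. *)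

Lemma isometries_agreeing_close (R : realType) (M : MetricStructure R)
    (g h : ms_car M -> ms_car M) (x y : ms_car M) :
  is_metric M ->
  (forall a b, ms_d (g a) (g b) = ms_d a b) -> (forall a b, ms_d (h a) (h b) = ms_d a b) ->
  h y = g y -> ms_d (h x) (g x) <= ms_d x y + ms_d x y.
Proof.
move=> [_ [_ [d_sym d_tri]]] g_iso h_iso hy_gy.
apply: (le_trans (d_tri _ (h y) _)).
by rewrite h_iso hy_gy g_iso [ms_d y x]d_sym.
Qed.

Lemma dense_map_approx_tuple (R : realType) (M : MetricStructure R)
    (T : Type) (e : T -> ms_car M) :
  dense_map e -> forall (n : nat) (xs : 'I_n -> ms_car M) (eps : R), 0 < eps ->
  exists ys : 'I_n -> T, forall k, @ms_d R M (xs k) (e (ys k)) < eps.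
Proof.
move=> e_dense n xs eps eps_gt0.
by apply: (choice (fun k y => @ms_d R M (xs k) (e y) < eps)) => k; apply: e_dense.
Qed.

Theorem lemma5p5 (R : realType) (M : MetricStructure R) (N : ClassicalStructure)
  (iota : cs_car N -> ms_car M) :
  is_polish M -> approximating iota ->
  forall U : (ms_car M -> ms_car M) -> Prop,
    autM_open U -> autN_open (trace_on_autN iota U).
Proof.
move=> [[d_metric _ _ _ _] _] [_ iota_dense autN_ext _] U [U_aut U_open].
split=> [s [] // | s [s_aut [g [Ug g_ext]]]].
have [n [xs [eps [eps_gt0 U_nbhd]]]] := U_open g Ug.
have [ys ys_close] := dense_map_approx_tuple iota_dense xs (divr_gt0 eps_gt0 (ltr0Sn _ 1)).
exists n, ys => t t_aut t_ys; split=> //.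
have [h [h_aut h_ext]] := autN_ext t t_aut.
exists h; split=> //; apply: U_nbhd => // k.
have [_ g_iso _ _] := U_aut g Ug; have [_ h_iso _ _] := h_aut.
have h_eq_g : h (iota (ys k)) = g (iota (ys k)) by rewrite h_ext g_ext t_ys.
apply: (le_lt_trans (isometries_agreeing_close _ d_metric g_iso h_iso h_eq_g)).
by rewrite [X in _ < X]splitr ltrD.
Qed.
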